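(* Let $F$ be a field, $t\ge 3$, and let $e_1,\dots,e_t$, $n_i$, $\sigma_i$ and $V$ be as follows: $e_1,\dots,e_t\in M_n(F)$ are nonzero pairwise orthogonal idempotents with $e_1+\cdots+e_t=I_n$, $n_i=\mathrm{rank}(e_i)$, $\sigma_1,\dots,\sigma_t\in F$ satisfy $\sum_i\sigma_ik_i\ne0$ for every integer tuple $\vec 0\ne(k_1,\dots,k_t)$ with $0\le k_i\le n_i$, and $V=\{a\in M_n(F): e_iae_j=0\ \forall i<j,\ \sum_i\sigma_i\mathrm{Tr}(e_iae_i)=0\}$. Let $u\in e_1M_n(F)e_2$ and $w\in e_2M_n(F)e_3$ with $uw\ne 0$. Then $U=F(u+w)+V$ is a Mathieu subspace of $M_n(F)$ containing $V$ as a proper subspace; in particular $V$ is not a maximal Mathieu subspace of $M_n(F)$.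
   Context: Let $\mathcal A$ be an associative algebra over a field $F$. An $F$-subspace $M\subseteq\mathcal A$ is a Mathieu subspace (MS) of $\mathcal A$ if for all $a,b,c\in\mathcal A$ such that $a^m\in M$ for all $m\ge 1$, there exists $N$ (depending on $a,b,c$) such that $ba^mc\in M$ for all $m\ge N$. A maximal MS of $\mathcal A$ is a proper MS of $\mathcal A$ that is not properly contained in any proper MS of $\mathcal A$. *)

From HB Require Import structures.
From mathcomp Require Import all_boot all_order all_algebra.
Set Implicit Arguments. Unset Strict Implicit. Unset Printing Implicit Defensive.
Import GRing.Theory.
Local Open Scope ring_scope.

Definition is_subspace (F : fieldType) (n : nat) (M : 'M[F]_n -> Prop) : Prop :=
  M 0 /\ (forall x y, M x -> M y -> M (x + y)) /\ (forall (c : F) x, M x -> M (c *: x)).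

Definition mathieu_subspace (F : fieldType) (n : nat) (M : 'M[F]_n -> Prop) : Prop :=
  is_subspace M /\
  forall a b c : 'M[F]_n, (forall m : nat, (1 <= m)%N -> M (a ^+ m)) ->
    exists N : nat, forall m : nat, (N <= m)%N -> M (b *m a ^+ m *m c).

Definition proper_sub (F : fieldType) (n : nat) (M : 'M[F]_n -> Prop) : Prop :=
  exists x, ~ M x.

Definition maximal_mathieu_subspace (F : fieldType) (n : nat) (M : 'M[F]_n -> Prop) : Prop :=
  mathieu_subspace M /\ proper_sub M /\
  forall M' : 'M[F]_n -> Prop, mathieu_subspace M' -> proper_sub M' ->
    (forall x, M x -> M' x) -> forall x, M' x -> M x.

From HB Require Import structures.
From mathcomp Require Import all_boot all_order all_algebra zify ring.
Set Implicit Arguments. Unset Strict Implicit. Unset Printing Implicit Defensive.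
Import GRing.Theory.
Local Open Scope ring_scope.

(* Write s = u + w and U = F s + V.  Every element of U has zero (1,3)-block,
   whereas the (1,3)-block of (c s + v)^2 is c^2 u w; so if all positive powers
   of a lie in U, then a lies in V.  The powers of a are then block lower
   triangular elements of U, and their (1,2)-block c u must vanish, so they lie
   in V.  A block lower triangular matrix whose positive powers all have zero
   weighted trace is nilpotent: its Fitting idempotent has idempotent diagonal
   blocks whose ranks k_i satisfy sum_i sigma_i k_i = 0, so all k_i vanish.
   Hence b a^m c is eventually 0, and V < U < M_n(F) because u w is not in U. *)

Lemma mxtrace_idem (F : fieldType) (n : nat) (P : 'M[F]_n) :
  P *m P = P -> \tr P = (\rank P)%:R.
Proof.
move=> PP; rewrite -{1}(mulmx_base P); rewrite -(mulmx_base P) in PP.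
move: (col_base_full P) (row_base_free P) PP.
move: (col_base P) (row_base P) => C R hC hR PP.
have RCR : R *m C *m R = R.
  by apply: (row_full_inj hC); rewrite !mulmxA -(mulmxA (C *m R)) PP.
have RC1 : R *m C = 1%:M by apply: (row_free_inj hR); rewrite /= RCR mul1mx.
by rewrite mxtrace_mulC RC1 mxtrace1.
Qed.

(* With char_poly A = r X^k and r(0) != 0, Bezout gives beta r + alpha X^(k+1) = 1;
   E = (alpha X^(k+1))(A) is idempotent, and if E = 0 then beta(A) r(A) = 1
   forces A^(k+1) = 0 by Cayley-Hamilton. *)
Lemma fitting_idempotent (F : fieldType) (n : nat) (A : 'M[F]_n.+1) :
  exists g : {poly F}, let E := horner_mx A (g * 'X) in
    E *m E = E /\ (E = 0 -> exists K, A ^+ K = 0).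
Proof.
have CH := Cayley_Hamilton A.
have [k [r]] := multiplicity_XsubC (char_poly A) 0.
rewrite monic_neq0 ?char_poly_monic //= subr0 => r0 chiE.
have cop : coprimep r ('X ^+ k.+1) by apply: coprimep_expr; rewrite coprimepX.
have [[u1 u2] /= Hb] := Bezout_coprimepP _ _ cop.
have /size_poly1P [c c0 Hc] : size (u1 * r + u2 * 'X ^+ k.+1) == 1%N.
  by rewrite (eqp_size Hb) size_poly1.
pose beta := c^-1 *: u1; pose alpha := c^-1 *: u2.
have bezout : beta * r + alpha * 'X ^+ k.+1 = 1.
  by rewrite /beta /alpha -!scalerAl -scalerDr Hc -mul_polyC -polyCM mulVf.
have chi_dvd q : horner_mx A (q * char_poly A) = 0 by rewrite rmorphM /= CH mulr0.
exists (alpha * 'X^k); rewrite -mulrA -exprSr.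
set E := horner_mx A _; set E' := horner_mx A (beta * r).
have E'E : E' = 1 - E by rewrite -(rmorph1 (horner_mx A)) -bezout rmorphD /= addrK.
split.
  have : E * E' = 0.
    by rewrite -rmorphM -(chi_dvd (alpha * beta * 'X)) chiE exprS; congr horner_mx; ring.
  by rewrite E'E mulrBr mulr1 => /eqP; rewrite subr_eq0 => /eqP.
move=> E0; exists k.+1.
have E'1 : E' = 1 by rewrite E'E E0 subr0.
rewrite -[A ^+ k.+1]mulr1 -E'1 -{1}(horner_mx_X A) -rmorphXn -rmorphM.
by rewrite -(chi_dvd (beta * 'X)) chiE exprS; congr horner_mx; ring.
Qed.

Section BlockLowerTriangular.
Variables (F : fieldType) (n t : nat) (e : 'I_t -> 'M[F]_n.+1).
Hypothesis e_idem : forall i, e i *m e i = e i.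
Hypothesis e_orth : forall i j, i != j -> e i *m e j = 0.
Hypothesis e_sum : \sum_(i < t) e i = 1%:M.

Definition block_lower (x : 'M[F]_n.+1) :=
  forall i j : 'I_t, (i < j)%N -> e i *m x *m e j = 0.

Lemma mulmx_split (x y : 'M[F]_n.+1) : x *m y = \sum_l x *m e l *m y.
Proof. by rewrite -mulmx_suml -mulmx_sumr e_sum mulmx1. Qed.

Lemma block_lower0 : block_lower 0.
Proof. by move=> i j _; rewrite mulmx0 mul0mx. Qed.

Lemma block_lower1 : block_lower 1%:M.
Proof. by move=> i j lt_ij; rewrite mulmx1 e_orth // neq_ltn lt_ij. Qed.

Lemma block_lowerD x y : block_lower x -> block_lower y -> block_lower (x + y).
Proof. by move=> hx hy i j lt_ij; rewrite mulmxDr mulmxDl hx // hy // addr0. Qed.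

Lemma block_lowerZ c x : block_lower x -> block_lower (c *: x).
Proof. by move=> hx i j lt_ij; rewrite -scalemxAr -scalemxAl hx // scaler0. Qed.

Lemma block_lowerM x y : block_lower x -> block_lower y -> block_lower (x *m y).
Proof.
move=> hx hy i j lt_ij; rewrite (mulmx_split x y) mulmx_sumr mulmx_suml big1 // => l _.
case: (ltnP i l) => [lt_il|le_li]; first by rewrite !mulmxA hx // !mul0mx.
by rewrite -(e_idem l) !mulmxA -(mulmxA _ _ y) -(mulmxA _ (e l *m y))
  hy ?(leq_ltn_trans le_li lt_ij) // mulmx0.
Qed.

Lemma block_lowerX x m : block_lower x -> block_lower (x ^+ m).
Proof.
move=> hx; elim: m => [|m IH]; first exact: block_lower1.
by rewrite exprS -mulmxE; apply: block_lowerM.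
Qed.

Lemma block_lower_horner x p : block_lower x -> block_lower (horner_mx x p).
Proof.
move=> hx; rewrite -[p]coefK poly_def rmorph_sum /=.
apply: (big_ind block_lower block_lower0 block_lowerD) => i _.
by rewrite horner_mxZ rmorphXn /= horner_mx_X; apply/block_lowerZ/block_lowerX.
Qed.

Lemma diag_block_mulmx x y k : block_lower x -> block_lower y ->
  e k *m (x *m y) *m e k = (e k *m x *m e k) *m (e k *m y *m e k).
Proof.
move=> hx hy; rewrite (mulmx_split x y) mulmx_sumr mulmx_suml (bigD1 k) //= big1 ?addr0.
  by rewrite -!mulmxA (mulmxA (e k) (e k)) e_idem.
move=> l /eqP ne_lk.
case: (ltngtP k l) => [lt_kl|lt_lk|/val_inj eq_kl]; last by rewrite eq_kl in ne_lk.
  by rewrite !mulmxA hx // !mul0mx.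
by rewrite -(e_idem l) !mulmxA -(mulmxA _ _ y) -(mulmxA _ (e l *m y)) hy // mulmx0.
Qed.

(* Downward induction on j: E e_j = \sum_l (E e_l) (E e_j), where the term
   for l > j vanishes by induction, for l < j by lower triangularity, and for
   l = j because the diagonal block does. *)
Lemma idem_block_lower_eq0 E : block_lower E -> E *m E = E ->
  (forall i, e i *m E *m e i = 0) -> E = 0.
Proof.
move=> hE EE hdiag.
suff col0 m (j : 'I_t) : (t - j <= m)%N -> E *m e j = 0.
  rewrite -[E]mulmx1 -e_sum mulmx_sumr big1 // => j _.
  by apply: (col0 t); rewrite leq_subr.
elim: m j => [|m IH] j le_m; first by move: (ltn_ord j) le_m; lia.
rewrite -{1}EE (mulmx_split E E) mulmx_suml big1 // => l _.
case: (ltnP j l) => [lt_jl|le_lj].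
  by rewrite (IH l) ?mul0mx //; move: le_m lt_jl; lia.
have blk0 : e l *m E *m e j = 0.
  by case: (ltngtP l j) le_lj => [lt_lj _|//|/val_inj -> _]; [exact: hE | exact: hdiag].
by rewrite -!mulmxA (mulmxA (e l)) blk0 mulmx0.
Qed.

Variable sigma : 'I_t -> F.

Definition weighted_trace (x : 'M[F]_n.+1) :=
  \sum_(i < t) sigma i * \tr (e i *m x *m e i).

Lemma weighted_trace0 : weighted_trace 0 = 0.
Proof.
by rewrite /weighted_trace big1 // => i _; rewrite mulmx0 mul0mx mxtrace0 mulr0.
Qed.

Lemma weighted_traceD x y : weighted_trace (x + y) = weighted_trace x + weighted_trace y.
Proof.
rewrite /weighted_trace -big_split; apply: eq_bigr => i _.
by rewrite mulmxDr mulmxDl mxtraceD mulrDr.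
Qed.

Lemma weighted_traceZ c x : weighted_trace (c *: x) = c * weighted_trace x.
Proof.
rewrite /weighted_trace mulr_sumr; apply: eq_bigr => i _.
by rewrite -scalemxAr -scalemxAl mxtraceZ mulrCA.
Qed.

Hypothesis sigma_free : forall k : 'I_t -> nat, (exists i, k i <> 0%N) ->
  (forall i, (k i <= \rank (e i))%N) -> \sum_(i < t) sigma i * (k i)%:R != 0.

(* The Fitting idempotent E of a is a polynomial in a without constant term,
   so its weighted trace vanishes; its diagonal blocks are idempotents whose
   traces are their ranks, so sigma_free forces them all to be zero. *)
Lemma block_lower_nilpotent a : block_lower a ->
  (forall m, (1 <= m)%N -> weighted_trace (a ^+ m) = 0) -> exists K, a ^+ K = 0.
Proof.
move=> ha htr; have [g [EE /(_ _) nilp_a]] := fitting_idempotent a; apply: nilp_a.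
set E := horner_mx a (g * 'X) in EE *.
have hE : block_lower E by apply: block_lower_horner.
have trE : weighted_trace E = 0.
  rewrite /E -[g * 'X]coefK poly_def rmorph_sum /=.
  apply: (big_ind (fun x => weighted_trace x = 0) weighted_trace0).
    by move=> x y hx hy; rewrite weighted_traceD hx hy addr0.
  move=> i _; rewrite horner_mxZ rmorphXn /= horner_mx_X weighted_traceZ coefMX.
  by case: (i : nat) => [|m]; rewrite ?mul0r // htr ?mulr0.
have diag_idem i : (e i *m E *m e i) *m (e i *m E *m e i) = e i *m E *m e i.
  by rewrite -diag_block_mulmx // EE.
apply: idem_block_lower_eq0 => // i; apply/eqP; apply: contraT => nz_i.
have ranks0 : \sum_(j < t) sigma j * (\rank (e j *m E *m e j))%:R = 0.
  by rewrite -[RHS]trE; apply: eq_bigr => j _; rewrite mxtrace_idem.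
have nz_rank : exists j, \rank (e j *m E *m e j) <> 0%N.
  by exists i; apply/eqP; rewrite mxrank_eq0.
have le_rank j : (\rank (e j *m E *m e j) <= \rank (e j))%N by exact: mxrankM_maxr.
by have := sigma_free nz_rank le_rank; rewrite ranks0 eqxx.
Qed.

End BlockLowerTriangular.

Section ExtendedSubspace.
Variables (F : fieldType) (n t : nat) (e : 'I_t -> 'M[F]_n.+1) (sigma : 'I_t -> F).
Hypothesis e_idem : forall i, e i *m e i = e i.
Hypothesis e_orth : forall i j, i != j -> e i *m e j = 0.
Hypothesis e_sum : \sum_(i < t) e i = 1%:M.
Hypothesis sigma_free : forall k : 'I_t -> nat, (exists i, k i <> 0%N) ->
  (forall i, (k i <= \rank (e i))%N) -> \sum_(i < t) sigma i * (k i)%:R != 0.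

Variable V : 'M[F]_n.+1 -> Prop.
Hypothesis VE : forall a, V a <-> block_lower e a /\ weighted_trace e sigma a = 0.

Variables (i1 i2 i3 : 'I_t) (u w : 'M[F]_n.+1).
Hypotheses (lt12 : (i1 < i2)%N) (lt23 : (i2 < i3)%N).
Hypothesis u_corner : exists x, u = e i1 *m x *m e i2.
Hypothesis w_corner : exists x, w = e i2 *m x *m e i3.
Hypothesis uw_neq0 : u *m w != 0.

Definition extV x := exists (c : F) (v : 'M[F]_n.+1), V v /\ x = c *: (u + w) + v.

Lemma V0 : V 0.
Proof. by apply/VE; split; [exact: block_lower0 | exact: weighted_trace0]. Qed.

Lemma VD x y : V x -> V y -> V (x + y).
Proof.
move=> /VE[Lx tx] /VE[Ly ty]; apply/VE; split; first exact: block_lowerD.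
by rewrite weighted_traceD tx ty addr0.
Qed.

Lemma VZ c x : V x -> V (c *: x).
Proof.
move=> /VE[Lx tx]; apply/VE; split; first exact: block_lowerZ.
by rewrite weighted_traceZ tx mulr0.
Qed.

Lemma V_extV x : V x -> extV x.
Proof. by move=> Vx; exists 0, x; rewrite scale0r add0r. Qed.

Lemma extV_subspace : is_subspace extV.
Proof.
split; first exact/V_extV/V0.
split=> [x y [c1 [v1 [V1 ->]]] [c2 [v2 [V2 ->]]] | c x [c1 [v1 [V1 ->]]]].
  by exists (c1 + c2), (v1 + v2); split; [exact: VD | rewrite scalerDl addrACA].
by exists (c * c1), (c *: v1); split; [exact: VZ | rewrite scalerDr scalerA].
Qed.

Let ne12 : i1 != i2. Proof. by rewrite neq_ltn lt12. Qed.
Let ne23 : i2 != i3. Proof. by rewrite neq_ltn lt23. Qed.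

Let ue1 : e i1 *m u = u.
Proof. by case: u_corner => x ->; rewrite !mulmxA e_idem. Qed.
Let ue2 : u *m e i2 = u.
Proof. by case: u_corner => x ->; rewrite -mulmxA e_idem. Qed.
Let we2 : e i2 *m w = w.
Proof. by case: w_corner => x ->; rewrite !mulmxA e_idem. Qed.
Let we3 : w *m e i3 = w.
Proof. by case: w_corner => x ->; rewrite -mulmxA e_idem. Qed.

Let e1s : e i1 *m (u + w) = u.
Proof. by rewrite mulmxDr ue1 -we2 mulmxA e_orth // mul0mx addr0. Qed.
Let se3 : (u + w) *m e i3 = w.
Proof. by rewrite mulmxDl we3 -ue2 -mulmxA e_orth // mulmx0 add0r. Qed.

Lemma block12_extV c v : block_lower e v ->
  e i1 *m (c *: (u + w) + v) *m e i2 = c *: u.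
Proof.
by move=> Lv; rewrite mulmxDr mulmxDl -scalemxAr -scalemxAl e1s ue2 Lv // addr0.
Qed.

Lemma block13_extV x : extV x -> e i1 *m x *m e i3 = 0.
Proof.
move=> [c [v [/VE[Lv _] ->]]]; rewrite mulmxDr mulmxDl -scalemxAr -scalemxAl.
rewrite -(mulmxA (e i1) (u + w)) se3 -we2 mulmxA e_orth // mul0mx scaler0.
by rewrite Lv ?(ltn_trans lt12) // add0r.
Qed.

Lemma block13_sqr c v : block_lower e v ->
  e i1 *m (c *: (u + w) + v) ^+ 2 *m e i3 = c ^+ 2 *: (u *m w).
Proof.
move=> Lv; rewrite expr2 -mulmxE mulmxA -mulmxA.
rewrite [e i1 *m _]mulmxDr [_ *m e i3]mulmxDl -scalemxAr -scalemxAl e1s se3.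
have uv0 : u *m (v *m e i3) = 0 by rewrite -ue2 -mulmxA (mulmxA (e i2)) Lv // mulmx0.
have vw0 : e i1 *m v *m w = 0 by rewrite -we2 mulmxA Lv // mul0mx.
have vv0 : e i1 *m v *m (v *m e i3) = 0.
  by rewrite mulmxA -(mulmxA (e i1)) block_lowerM ?(ltn_trans lt12).
rewrite mulmxDl !mulmxDr -!scalemxAl -!scalemxAr uv0 vw0 vv0 !scaler0 !addr0.
by rewrite scalerA -expr2.
Qed.

Lemma lower_extV_V x : block_lower e x -> extV x -> V x.
Proof.
move=> Lx [c [v [Vv def_x]]]; have /VE[Lv _] := Vv.
have /eqP : c *: u = 0 by rewrite -(block12_extV c Lv) -def_x Lx.
rewrite scaler_eq0 => /orP[/eqP c0|/eqP u0].
  by rewrite def_x c0 scale0r add0r.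
by move: uw_neq0; rewrite u0 mul0mx eqxx.
Qed.

Lemma extV_sqr_V a : extV a -> extV (a ^+ 2) -> V a.
Proof.
move=> [c [v [Vv def_a]]] /block13_extV; have /VE[Lv _] := Vv.
rewrite def_a block13_sqr // => /eqP; rewrite scaler_eq0 (negPf uw_neq0) orbF.
by rewrite expf_eq0 /= => /eqP ->; rewrite scale0r add0r.
Qed.

Lemma extV_mathieu : mathieu_subspace extV.
Proof.
split=> [|a b c ext_pow]; first exact: extV_subspace.
have /VE[La _] : V a by apply: extV_sqr_V; [rewrite -[a]expr1|]; exact: ext_pow.
have V_pow m : (1 <= m)%N -> V (a ^+ m).
  by move=> m_gt0; apply: lower_extV_V; [exact: block_lowerX | exact: ext_pow].
have [K aK0] : exists K, a ^+ K = 0.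
  apply: (block_lower_nilpotent e_idem e_orth e_sum sigma_free La) => m m_gt0.
  by have /VE[] := V_pow m m_gt0.
exists K => m le_Km; rewrite -(subnK le_Km) exprD aK0 mulr0 mulmx0 mul0mx.
exact/V_extV/V0.
Qed.

Lemma notextV_mul_uw : ~ extV (u *m w).
Proof.
by move/block13_extV; rewrite mulmxA ue1 -mulmxA we3 => /eqP; rewrite (negPf uw_neq0).
Qed.

Lemma notV_add_uw : ~ V (u + w).
Proof.
move=> /VE[Ls _]; have := block12_extV 1 (@block_lower0 _ _ _ e).
rewrite addr0 !scale1r Ls // => u0.
by move: uw_neq0; rewrite -u0 mul0mx eqxx.
Qed.

End ExtendedSubspace.

Theorem mainTheorem3 (F : fieldType) (n t : nat) (ht : (3 <= t)%N)
  (e : 'I_t -> 'M[F]_n) (sigma : 'I_t -> F)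
  (he_nz : forall i, e i != 0)
  (he_idem : forall i, e i *m e i = e i)
  (he_orth : forall i j, i != j -> e i *m e j = 0)
  (he_sum : \sum_(i < t) e i = 1%:M)
  (hsigma : forall k : 'I_t -> nat, (exists i, k i <> 0%N) ->
      (forall i, (k i <= \rank (e i))%N) ->
      \sum_(i < t) sigma i * (k i)%:R != 0)
  (V : 'M[F]_n -> Prop)
  (hV : forall a, V a <->
      ((forall i j : 'I_t, (i < j)%N -> e i *m a *m e j = 0) /\
       \sum_(i < t) sigma i * \tr (e i *m a *m e i) = 0))
  (i1 i2 i3 : 'I_t) (hi1 : val i1 = 0%N) (hi2 : val i2 = 1%N) (hi3 : val i3 = 2%N)
  (u w : 'M[F]_n)
  (hu : exists x, u = e i1 *m x *m e i2)
  (hw : exists x, w = e i2 *m x *m e i3)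
  (huw : u *m w != 0) :
  let U := fun x : 'M[F]_n => exists (c : F) (v : 'M[F]_n), V v /\ x = c *: (u + w) + v in
  mathieu_subspace U /\ (forall x, V x -> U x) /\ (exists x, U x /\ ~ V x) /\
  ~ maximal_mathieu_subspace V.
Proof.
case: n e he_nz he_idem he_orth he_sum hsigma V hV u w hu hw huw
  => [|n] e he_nz he_idem he_orth he_sum hsigma V hV u w hu hw huw U.
  by have /eqP[] := he_nz i1; apply: flatmx0.
have VE : forall a, V a <-> block_lower e a /\ weighted_trace e sigma a = 0 := hV.
have lt12 : (i1 < i2)%N by rewrite hi1 hi2.
have lt23 : (i2 < i3)%N by rewrite hi2 hi3.
have ms_U : mathieu_subspace U.
  exact: (extV_mathieu he_idem he_orth he_sum hsigma VE lt12 lt23 hu hw huw).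
have V_U x : V x -> U x by exact: V_extV.
have U_sw : U (u + w) by exists 1, 0; rewrite scale1r addr0; split=> //; exact: V0 VE.
have V_sw : ~ V (u + w) := notV_add_uw he_idem he_orth VE lt12 hu hw huw.
split=> //; split=> //; split; first by exists (u + w).
move=> [_ [_ maxV]]; apply/V_sw/(maxV U) => //.
by exists (u *m w); exact: (notextV_mul_uw he_idem he_orth VE lt12 lt23 hu hw huw).
Qed.
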